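(* Let $M_5$ be the five-valued matrix on the set of truth values $V=\{0,1,2,3,4\}$ with designated set $D=\{0\}$ and operations defined as follows (for $x,y\in V$): - Implication $x\to y$ is given by the rows (row $x$ lists $x\to 0, x\to 1, x\to 2, x\to 3, x\to 4$): row $0$: $0,1,1,1,1$; row $1$: $0,0,0,0,0$; row $2$: $0,0,0,0,0$; row $3$: $0,0,4,0,4$; row $4$: $0,0,3,3,0$. - Conjunction: $x\wedge y=0$ if $x=y=0$, and $x\wedge y=1$ otherwise. - Disjunction: $x\vee y=0$ if $x=0$ or $y=0$, and $x\vee y=1$ otherwise. - Negation: $\neg 0=2$, $\neg 1=0$, $\neg 2=0$, $\neg 3=1$, $\neg 4=1$. - Falsum: $\bot=1$. Then: (i) $M_5$ is normal, i.e. for all $x,y\in V$, if $x\in D$ and $(x\to y)\in D$ then $y\in D$; (ii) each of the following formulas takes a designated value under every assignment of values in $V$ to $p,q,r$: (K) $p\to(q\to p)$; peirce $((p\to q)\to p)\to p$; andelimr $(p\wedge q)\to p$; andeliml $(p\wedge q)\to q$; andintro $p\to(q\to(p\wedge q))$; orintror $p\to(p\vee q)$; orintrol $p\to(q\vee p)$; orelim $(p\vee q)\to((p\to r)\to((q\to r)\to r))$; contrap $(p\to\neg q)\to(q\to\neg p)$; notelim $\neg p\to(p\to q)$; falseelim $\bot\to p$; (iii) the formula (S) $(p\to(q\to r))\to((p\to q)\to(p\to r))$ takes the non-designated value $1$ under the assignment $p=3,q=0,r=2$. Consequently, (S) is not derivable from the other eleven axioms listed in (ii) (taken as schemes/with substitution)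 using modus ponens as the sole inference rule.
   Context: Formulas are built from propositional variables using the binary connectives $\to,\wedge,\vee$, the unary connective $\neg$ and the constant $\bot$. A (many-valued) matrix consists of a finite set of truth values, a subset of designated values, and an operation on the truth values for each connective; a formula is evaluated under an assignment of truth values to its variables by interpreting each connective by its operation. A formula is validated by the matrix if it takes a designated value under every assignment. The matrix is called normal if modus ponens preserves designation: whenever $x$ and $x\to y$ are designated, so is $y$. Modus ponens is the rule: from $p$ and $p\to q$ infer $q$. *)

From mathcomp Require Import all_boot.
Set Implicit Arguments. Unset Strict Implicit. Unset Printing Implicit Defensive.

Inductive form : Type :=
| Var : nat -> form
| Imp : form -> form -> form
| And : form -> form -> form
| Or  : form -> form -> form
| Neg : form -> form
| Bot : form.

Definition V := 'I_5.
Definition designated (x : V) : bool := (nat_of_ord x == 0%N).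

Definition impn (x y : nat) : nat :=
  match x, y with
  | 0, 0 => 0 | 0, _ => 1
  | 1, _ => 0
  | 2, _ => 0
  | 3, 0 => 0 | 3, 1 => 0 | 3, 2 => 4 | 3, 3 => 0 | 3, _ => 4
  | _, 0 => 0 | _, 1 => 0 | _, 2 => 3 | _, 3 => 3 | _, _ => 0
  end.
Definition andn (x y : nat) : nat := if (x == 0) && (y == 0) then 0 else 1.
Definition orn (x y : nat) : nat := if (x == 0) || (y == 0) then 0 else 1.
Definition negn (x : nat) : nat :=
  match x with 0 => 2 | 1 => 0 | 2 => 0 | _ => 1 end.

Definition M5imp (x y : V) : V := inord (impn x y).
Definition M5and (x y : V) : V := inord (andn x y).
Definition M5or  (x y : V) : V := inord (orn x y).
Definition M5neg (x : V) : V := inord (negn x).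
Definition M5bot : V := inord 1.

Fixpoint eval (v : nat -> V) (f : form) : V :=
  match f with
  | Var n => v n
  | Imp a b => M5imp (eval v a) (eval v b)
  | And a b => M5and (eval v a) (eval v b)
  | Or a b => M5or (eval v a) (eval v b)
  | Neg a => M5neg (eval v a)
  | Bot => M5bot
  end.

Definition validated (f : form) : Prop := forall v : nat -> V, designated (eval v f).

Definition normal : Prop :=
  forall x y : V, designated x -> designated (M5imp x y) -> designated y.

Definition axK (p q : form) := Imp p (Imp q p).
Definition axPeirce (p q : form) := Imp (Imp (Imp p q) p) p.
Definition axAndElimR (p q : form) := Imp (And p q) p.
Definition axAndElimL (p q : form) := Imp (And p q) q.
Definition axAndIntro (p q : form) := Imp p (Imp q (And p q)).
Definition axOrIntroR (p q : form) := Imp p (Or p q).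
Definition axOrIntroL (p q : form) := Imp p (Or q p).
Definition axOrElim (p q r : form) :=
  Imp (Or p q) (Imp (Imp p r) (Imp (Imp q r) r)).
Definition axContrap (p q : form) := Imp (Imp p (Neg q)) (Imp q (Neg p)).
Definition axNotElim (p q : form) := Imp (Neg p) (Imp p q).
Definition axFalseElim (p : form) := Imp Bot p.
Definition axS (p q r : form) := Imp (Imp p (Imp q r)) (Imp (Imp p q) (Imp p r)).

Definition eleven_axioms (f : form) : Prop :=
  exists a b c : form,
    f = axK a b \/ f = axPeirce a b \/ f = axAndElimR a b \/ f = axAndElimL a b \/
    f = axAndIntro a b \/ f = axOrIntroR a b \/ f = axOrIntroL a b \/
    f = axOrElim a b c \/ f = axContrap a b \/ f = axNotElim a b \/
    f = axFalseElim a.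

Inductive derivable (Ax : form -> Prop) : form -> Prop :=
| d_ax : forall f, Ax f -> derivable Ax f
| d_mp : forall f g, derivable Ax f -> derivable Ax (Imp f g) -> derivable Ax g.

Definition p := Var 0.
Definition q := Var 1.
Definition r := Var 2.

From Pilot Require Import Defs.
From mathcomp Require Import all_boot.

(* Soundness: every axiom instance is validated by M5 and modus ponens
   preserves validity since M5 is normal, so every theorem of the eleven
   axioms is validated by M5, whereas (S) takes the undesignated value 1
   at p = 3, q = 0, r = 2. *)

Lemma M5impE x y : nat_of_ord (M5imp x y) = impn x y.
Proof.
rewrite /M5imp inordK //.
by case: x y => [[|[|[|[|[|?]]]]] ?] [[|[|[|[|[|?]]]]] ?].
Qed.

Lemma M5andE x y : nat_of_ord (M5and x y) = andn x y.
Proof. by rewrite /M5and inordK // /andn; case: ifP. Qed.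

Lemma M5orE x y : nat_of_ord (M5or x y) = orn x y.
Proof. by rewrite /M5or inordK // /orn; case: ifP. Qed.

Lemma M5negE x : nat_of_ord (M5neg x) = Defs.negn x.
Proof. by rewrite /M5neg inordK //; case: x => [[|[|[|[|[|?]]]]] ?]. Qed.

Lemma M5botE : nat_of_ord M5bot = 1.
Proof. by rewrite /M5bot inordK. Qed.

Ltac M5_simpl :=
  rewrite /designated; repeat rewrite ?M5impE ?M5andE ?M5orE ?M5negE ?M5botE.

Ltac case_V x := case: x => [[|[|[|[|[|?]]]]] ?] //=.

Lemma M5_normal : normal.
Proof. by move=> x y; M5_simpl; case_V x; case_V y. Qed.

Lemma eleven_axioms_validated f : eleven_axioms f -> validated f.
Proof.
move=> [a [b [c Hf]]] v.
case: Hf => [->|[->|[->|[->|[->|[->|[->|[->|[->|[->|->]]]]]]]]]] /=; M5_simpl;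
  move: (eval v a) (eval v b) (eval v c) => x y z;
  by case_V x; case_V y; case_V z.
Qed.

Lemma derivable_validated {Ax : form -> Prop} :
  (forall f, Ax f -> validated f) -> forall f, derivable Ax f -> validated f.
Proof.
move=> AxV f; elim=> [g /AxV //| g h _ IHg _ IHgh] v.
exact: M5_normal (IHg v) (IHgh v).
Qed.

Lemma axS_eval_refuted (v : nat -> V) :
  nat_of_ord (v 0%N) = 3%N -> nat_of_ord (v 1%N) = 0%N ->
  nat_of_ord (v 2%N) = 2%N -> nat_of_ord (eval v (axS p q r)) = 1%N.
Proof. by move=> v0 v1 v2 /=; rewrite !M5impE v0 v1 v2. Qed.

Lemma axS_not_validated : ~ validated (axS p q r).
Proof.
pose v (n : nat) : V := inord (if n == 0 then 3 else if n == 1 then 0 else 2).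
move/(_ v); rewrite /designated axS_eval_refuted //=; by rewrite inordK.
Qed.

Theorem mainTheorem1 :
  (* (i) *)
  normal /\
  (* (ii) *)
  (validated (axK p q) /\ validated (axPeirce p q) /\ validated (axAndElimR p q) /\
   validated (axAndElimL p q) /\ validated (axAndIntro p q) /\
   validated (axOrIntroR p q) /\ validated (axOrIntroL p q) /\
   validated (axOrElim p q r) /\ validated (axContrap p q) /\
   validated (axNotElim p q) /\ validated (axFalseElim p)) /\
  (* (iii) *)
  (forall v : nat -> V, nat_of_ord (v 0%N) = 3%N -> nat_of_ord (v 1%N) = 0%N ->
     nat_of_ord (v 2%N) = 2%N -> nat_of_ord (eval v (axS p q r)) = 1%N) /\
  (* consequence *)
  ~ derivable eleven_axioms (axS p q r).
Proof.
split; first exact: M5_normal.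
split.
  by repeat split; apply: eleven_axioms_validated; exists p, q, r; tauto.
split; first exact: axS_eval_refuted.
by move/(derivable_validated eleven_axioms_validated); apply: axS_not_validated.
Qed.
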